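(* Let $a>0$ with $a\neq1$, and let $x>0$, $y>0$. (i) If $x\le 1$ and $a<1$, then $$\Gamma(x,y)\ \ge\ \Big(\frac{a}{e}\Big)^{x-1}\Big(\frac{1-x}{1-a}\Big)^{x-1}\int_0^1 t^{\frac{1-a}{a}}\big(-\ln(1-t)\big)^{y-1}\,dt .$$ (ii) If $x\ge1$, $a>1$ and $y>\frac{a-1}{a}$, then the integral on the right converges and the reverse inequality holds: $$\Gamma(x,y)\ \le\ \Big(\frac{a}{e}\Big)^{x-1}\Big(\frac{1-x}{1-a}\Big)^{x-1}\int_0^1 t^{\frac{1-a}{a}}\big(-\ln(1-t)\big)^{y-1}\,dt .$$ (When $x=1$ the factor $\big(\frac{1-x}{1-a}\big)^{x-1}$ is interpreted as $0^0=1$.)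
   Context: For $x>0,y>0$ the Bigamma function is the (convergent) improper integral $\Gamma(x,y):=\int_0^1(-\ln t)^{x-1}\big(-\ln(1-t)\big)^{y-1}\,dt$. *)

From HB Require Import structures.
From mathcomp Require Import all_boot all_order all_algebra.
From mathcomp Require Import all_classical all_reals all_analysis.
Set Implicit Arguments. Unset Strict Implicit. Unset Printing Implicit Defensive.
Import Order.TTheory GRing.Theory Num.Theory.
Local Open Scope classical_set_scope.
Local Open Scope ring_scope.

(* The integrand is nonnegative on ]0,1[, so the (convergent) improper integral
   coincides with the Lebesgue integral over ]0,1[ (extended-real valued). *)
Definition bigamma_integrand {R : realType} (x y : R) (t : R) : R :=
  (- ln t) `^ (x - 1) * (- ln (1 - t)) `^ (y - 1).

Definition Bigamma {R : realType} (x y : R) : \bar R :=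
  (\int[@lebesgue_measure R]_(t in `]0%R, 1%R[) (bigamma_integrand x y t)%:E)%E.

Definition cmp_integrand {R : realType} (a y : R) (t : R) : R :=
  t `^ ((1 - a) / a) * (- ln (1 - t)) `^ (y - 1).

(* the constant (a/e)^(x-1) ((1-x)/(1-a))^(x-1); powR 0 0 = 1 handles x = 1 *)
Definition cmp_const {R : realType} (a x : R) : R :=
  (a / expR 1) `^ (x - 1) * ((1 - x) / (1 - a)) `^ (x - 1).

From HB Require Import structures.
From mathcomp Require Import all_boot all_order all_algebra.
From mathcomp Require Import all_classical all_reals all_analysis.
From mathcomp Require Import ring lra measurable_realfun.
Set Implicit Arguments. Unset Strict Implicit. Unset Printing Implicit Defensive.
Import Order.TTheory GRing.Theory Num.Theory.
Import numFieldTopology.Exports numFieldNormedType.Exports.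
Local Open Scope classical_set_scope.
Local Open Scope ring_scope.

(* For [c > 0], concavity gives [ln u <= ln c + u / c - 1].  Multiplying by
   [x - 1] and exponentiating at [u := - ln t] bounds [(- ln t) `^ (x - 1)] by
   [(c / e) `^ (x - 1) * expR ((x - 1) / c * - ln t)], from above when [x >= 1]
   and from below when [x <= 1]; the choice [c := a (1 - x) / (1 - a)] makes this
   exactly [cmp_const a x * t `^ ((1 - a) / a)].  Multiplying by
   [(- ln (1 - t)) `^ (y - 1)] and integrating yields both inequalities.
   For [a > 1] the comparison integrand is at most [t `^ ((1 - a) / a + y - 1)]
   near [0] and, by the case [a = 2] of the pointwise bound, a multiple of
   [(1 - t) `^ (- 1 / 2)] near [1]; powers [t `^ p] with [p > -1] are integrable
   on [ ]0, 1[ ] by the fundamental theorem of calculus on the compact intervals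
   exhausting it. *)

Section powR_ln.
Variable R : realType.
Implicit Types c k q t u v : R.

Lemma gt0_powRE u k : 0 < u -> u `^ k = expR (k * ln u).
Proof. by move=> u0; rewrite /powR gt_eqF. Qed.

Lemma powR_le1 t k : 0 < t <= 1 -> 0 <= k -> t `^ k <= 1.
Proof. by move=> t01 k0; rewrite -[leRHS](powRr0 t); exact: ger_powR. Qed.

Lemma le0_ger_powR k u v : k <= 0 -> 0 < u -> u <= v -> v `^ k <= u `^ k.
Proof.
move=> k0 u0 uv; have v0 := lt_le_trans u0 uv.
by rewrite !gt0_powRE // ler_expR ler_wnM2l // ler_ln.
Qed.

Lemma powR_le2 u k : 2^-1 <= u <= 1 -> -1 <= k <= 0 -> u `^ k <= 2.
Proof.
move=> /andP[u2 u1] /andP[k1 k0]; have h0 : 0 < 2^-1 :> R by rewrite invr_gt0.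
have u0 : 0 < u by exact: lt_le_trans u2.
apply: le_trans (le0_ger_powR k0 h0 u2) _.
rewrite [leRHS](_ : _ = 2^-1 `^ (-1)); last by rewrite powR_inv1 ?invrK // ltW.
by apply: ger_powR => //; rewrite h0 invf_le1 ?ler1n.
Qed.

Lemma mul_powR_onem_le t c q : 0 < t < 1 -> -1 <= c <= 0 -> -1 <= q <= 0 ->
  t `^ c * (1 - t) `^ q <= 2 * (t `^ c + (1 - t) `^ q).
Proof.
move=> /andP[t0 t1] c10 q10.
have tc0 := powR_ge0 t c; have tq0 := powR_ge0 (1 - t) q.
have [th|th] := leP t 2^-1.
  have : (1 - t) `^ q <= 2 by apply: powR_le2 => //; apply/andP; split; lra.
  nra.
have : t `^ c <= 2 by apply: powR_le2 => //; apply/andP; split; lra.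
nra.
Qed.

Lemma ln_le_tangent u v : 0 < u -> 0 < v -> ln u <= ln v + (u / v - 1).
Proof.
move=> u0 v0; have uv0 : 0 < u / v by rewrite divr_gt0.
rewrite -lerBlDl -ln_div ?posrE //.
have := @le_ln1Dx R (u / v - 1); rewrite (addrC 1) subrK; apply; lra.
Qed.

Lemma ge0_powR_le_tangent u v k : 0 < u -> 0 < v -> 0 <= k ->
  u `^ k <= v `^ k * expR (- k) * expR (k / v * u).
Proof.
move=> u0 v0 k0; rewrite !gt0_powRE // -!expRD ler_expR mulrAC -mulrA.
have := ler_wpM2l k0 (ln_le_tangent u0 v0); lra.
Qed.

Lemma le0_powR_ge_tangent u v k : 0 < u -> 0 < v -> k <= 0 ->
  v `^ k * expR (- k) * expR (k / v * u) <= u `^ k.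
Proof.
move=> u0 v0 k0; rewrite !gt0_powRE // -!expRD ler_expR mulrAC -mulrA.
have := ler_wnM2l k0 (ln_le_tangent u0 v0); lra.
Qed.

Lemma le_oppln_onem t : 0 < t < 1 -> t <= - ln (1 - t).
Proof. by move=> /andP[t0 t1]; rewrite lerNr -[1 - t]/(1 + - t) le_ln1Dx // ltrN2. Qed.

End powR_ln.

Section comparison_weight.
Variable R : realType.
Implicit Types a t x : R.

Lemma cmp_const1 a : cmp_const a 1 = 1.
Proof. by rewrite /cmp_const subrr !powRr0 mulr1. Qed.

Lemma cmp_constE a x : 0 < a -> 0 < (1 - x) / (1 - a) ->
  cmp_const a x = (a * ((1 - x) / (1 - a))) `^ (x - 1) * expR (- (x - 1)).
Proof.
move=> a0 c0; rewrite /cmp_const -powRM; last 2 first.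
- by rewrite divr_ge0 // ltW // expR_gt0.
- exact: ltW.
have -> : a / expR 1 * ((1 - x) / (1 - a)) = a * ((1 - x) / (1 - a)) * expR (-1).
  by rewrite expRN mulrAC.
rewrite powRM; last 2 first.
- by rewrite mulr_ge0 // ltW.
- exact/ltW/expR_gt0.
by rewrite -expRM mulN1r.
Qed.

Lemma expR_tangent_oppln a x t : 0 < a -> a != 1 -> x != 1 -> 0 < t ->
  expR ((x - 1) / (a * ((1 - x) / (1 - a))) * - ln t) = t `^ ((1 - a) / a).
Proof.
move=> a0 a1 x1 t0; rewrite gt0_powRE //; congr expR.
have ha : a != 0 by rewrite gt_eqF.
have h1 : 1 - a != 0 by rewrite subr_eq0 eq_sym.
have h2 : 1 - x != 0 by rewrite subr_eq0 eq_sym.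
by field; rewrite h1 h2 ha.
Qed.

Lemma cmp_const_powR_le_oppln a x t : 0 < a < 1 -> 0 < x <= 1 -> 0 < t < 1 ->
  cmp_const a x * t `^ ((1 - a) / a) <= (- ln t) `^ (x - 1).
Proof.
move=> /andP[a0 a1] /andP[x0 x1] t01; have /andP[t0 t1] := t01.
have lnt0 : 0 < - ln t by rewrite oppr_gt0 ln_lt0.
have [->|xN1] := eqVneq x 1.
  rewrite cmp_const1 subrr powRr0 mul1r powR_le1 ?t0 ?(ltW t1) //.
  by rewrite divr_ge0 ?subr_ge0 ?(ltW a0) ?(ltW a1).
have x_lt1 : x < 1 by rewrite lt_neqAle xN1 x1.
have c0 : 0 < (1 - x) / (1 - a) by rewrite divr_gt0 // subr_gt0.
rewrite cmp_constE // -(expR_tangent_oppln a0 (negbT (lt_eqF a1)) xN1 t0).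
by apply: le0_powR_ge_tangent => //; [exact: mulr_gt0 | rewrite subr_le0].
Qed.

Lemma oppln_le_cmp_const_powR a x t : 1 < a -> 1 <= x -> 0 < t < 1 ->
  (- ln t) `^ (x - 1) <= cmp_const a x * t `^ ((1 - a) / a).
Proof.
move=> a1 x1 t01; have /andP[t0 t1] := t01; have a0 : 0 < a by lra.
have lnt0 : 0 < - ln t by rewrite oppr_gt0 ln_lt0.
have [->|xN1] := eqVneq x 1.
  rewrite cmp_const1 subrr powRr0 mul1r -[leLHS](powRr0 t).
  apply: ger_powR; first by rewrite t0 ltW.
  by rewrite pmulr_lle0 ?invr_gt0 // subr_le0 ltW.
have c0 : 0 < (1 - x) / (1 - a).
  have x_gt1 : 1 < x by rewrite lt_neqAle eq_sym xN1 x1.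
  by rewrite -mulrNN -invrN !opprB divr_gt0 // subr_gt0.
rewrite cmp_constE // -(expR_tangent_oppln a0 (negbT (gt_eqF a1)) xN1 t0).
by apply: ge0_powR_le_tangent => //; [exact: mulr_gt0 | rewrite subr_ge0].
Qed.

End comparison_weight.

Section nonnegative_integrals.
Context d (T : measurableType d) (R : realType) (mu : {measure set T -> \bar R}).
Local Open Scope ereal_scope.

Lemma ge0_integrable_le (D : set T) (f : T -> R) (C : R) :
  measurable_fun D f -> (forall t, D t -> (0 <= f t)%R) ->
  \int[mu]_(t in D) (f t)%:E <= C%:E -> mu.-integrable D (fun t => (f t)%:E).
Proof.
move=> mf f0 fC; apply/integrableP; split; first exact/measurable_EFinP.
under eq_integral => t /[!inE] Dt do rewrite /comp abse_EFin ger0_norm ?f0 //.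
exact: le_lt_trans fC (ltry _).
Qed.

Lemma ge0_le_integrable (D : set T) (f g : T -> R) :
  measurable D -> measurable_fun D f -> (forall t, D t -> (0 <= f t <= g t)%R) ->
  mu.-integrable D (fun t => (g t)%:E) -> mu.-integrable D (fun t => (f t)%:E).
Proof.
move=> mD mf fg; apply: le_integrable => //; first exact/measurable_EFinP.
move=> t Dt; have /andP[f0 fgt] := fg t Dt.
by rewrite !abse_EFin lee_fin !ger0_norm // (le_trans f0).
Qed.

Lemma ge0_le_integral_scale (D : set T) (f g : T -> R) (k : R) :
  measurable D -> measurable_fun D f -> measurable_fun D g ->
  (forall t, D t -> (0 <= f t)%R) -> (forall t, D t -> (0 <= g t)%R) -> (0 <= k)%R ->
  (forall t, D t -> (f t <= k * g t)%R) ->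
  \int[mu]_(t in D) (f t)%:E <= k%:E * \int[mu]_(t in D) (g t)%:E.
Proof.
move=> mD mf mg f0 g0 k0 fkg.
have g0E t : D t -> 0 <= (g t)%:E by move=> Dt; rewrite lee_fin g0.
have mgE : measurable_fun D (fun t => (g t)%:E) by exact/measurable_EFinP.
rewrite -(ge0_integralZl_EFin _ mD g0E mgE k0).
apply: ge0_le_integral => //.
- exact/measurable_EFinP.
- exact/measurable_funeM.
Qed.

Lemma ge0_ge_integral_scale (D : set T) (f g : T -> R) (k : R) :
  measurable D -> measurable_fun D f -> measurable_fun D g ->
  (forall t, D t -> (0 <= g t)%R) -> (0 <= k)%R ->
  (forall t, D t -> (k * g t <= f t)%R) ->
  k%:E * \int[mu]_(t in D) (g t)%:E <= \int[mu]_(t in D) (f t)%:E.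
Proof.
move=> mD mf mg g0 k0 kgf.
have g0E t : D t -> 0 <= (g t)%:E by move=> Dt; rewrite lee_fin g0.
have mgE : measurable_fun D (fun t => (g t)%:E) by exact/measurable_EFinP.
rewrite -(ge0_integralZl_EFin _ mD g0E mgE k0).
apply: ge0_le_integral => //.
- by move=> t Dt; apply: mule_ge0; rewrite lee_fin // g0.
- exact/measurable_funeM.
- exact/measurable_EFinP.
Qed.

End nonnegative_integrals.

Section unit_interval.
Variable R : realType.
Let mu := @lebesgue_measure R.

Let e (n : nat) : R := (n.+3%:R)^-1.

Let e_gt0 n : 0 < e n.
Proof. by rewrite invr_gt0 ltr0n. Qed.

Let e_lt_onem n : e n < 1 - e n.
Proof.
have : e n <= 3^-1 by rewrite lef_pV2 ?posrE ?ltr0n // ler_nat.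
lra.
Qed.

Let e_nonincreasing n m : (n <= m)%N -> e m <= e n.
Proof. by move=> nm; rewrite lef_pV2 ?posrE ?ltr0n // ler_nat !ltnS. Qed.

Let bigcup_itv_e : \bigcup_n `[e n, 1 - e n]%classic = `]0, 1[%classic :> set R.
Proof.
apply/seteqP; split => t.
  move=> [n _] /=; rewrite !in_itv /= => /andP[ent tne].
  by have en0 := e_gt0 n; apply/andP; split; lra.
rewrite /= in_itv /= => /andP[t0 t1].
have m0 : 0 < Num.min t (1 - t) by rewrite lt_min t0 subr_gt0.
exists (Num.trunc (Num.min t (1 - t))^-1) => //=.
have : e (Num.trunc (Num.min t (1 - t))^-1) < Num.min t (1 - t).
  rewrite -[ltRHS]invrK ltf_pV2 ?posrE ?invr_gt0 ?ltr0n //.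
  by apply: lt_trans (truncnS_gt _) _; rewrite ltr_nat.
by rewrite lt_min in_itv /= => /andP[? ?]; apply/andP; split; lra.
Qed.

Lemma ge0_integral_oo01_le_itvcc (f : R -> R) (C : \bar R) :
  measurable_fun (`]0, 1[ : set R) f -> (forall t : R, 0 < t < 1 -> 0 <= f t) ->
  (forall a b, 0 < a -> a < b -> b < 1 ->
     (\int[mu]_(t in `[a, b]) (f t)%:E <= C)%E) ->
  (\int[mu]_(t in `]0%R, 1%R[) (f t)%:E <= C)%E.
Proof.
move=> mf f0 fC; rewrite -bigcup_itv_e.
have sub n : `[e n, 1 - e n] `<=` `]0, 1[%classic by move=> t ent; rewrite -bigcup_itv_e; exists n.
apply: (cvge_to_le (ge0_nondecreasing_set_cvg_integral _ _ _ _)).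
- move=> n m nm; rewrite subsetEset => t /=; rewrite !in_itv /= => /andP[? ?].
  by have emn := e_nonincreasing nm; apply/andP; split; lra.
- by move=> n; exact: measurable_itv.
- by move=> n; apply/measurable_EFinP; exact: measurable_funS mf.
- by move=> n t /sub; rewrite /= in_itv /= lee_fin => /f0.
- apply: nearW => n; apply: fC => //; have := e_gt0 n; have := e_lt_onem n; lra.
Qed.

Lemma ge0_integral_oo01_antiderivative_le (f F : R -> R) (M : R) :
  {within `]0, 1[%classic, continuous f} -> (forall t : R, 0 < t < 1 -> 0 <= f t) ->
  (forall t : R, 0 < t < 1 -> is_derive t 1 F (f t)) ->
  (forall t : R, 0 < t < 1 -> `|F t| <= M) ->
  (\int[mu]_(t in `]0%R, 1%R[) (f t)%:E <= (M *+ 2)%:E)%E.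
Proof.
move=> cf f0 dF FM; apply: ge0_integral_oo01_le_itvcc => //.
  exact: subspace_continuous_measurable_fun.
move=> a b a0 ab b1.
have ab01 t : a <= t <= b -> 0 < t < 1 by move=> /andP[? ?]; apply/andP; split; lra.
rewrite (@continuous_FTC2 _ f F) //.
- have /FM/ler_normlP[Fa1 Fa2] : 0 < a < 1 by apply/andP; split; lra.
  have /FM/ler_normlP[Fb1 Fb2] : 0 < b < 1 by apply/andP; split; lra.
  rewrite -EFinB lee_fin mulr2n; lra.
- by apply: continuous_subspaceW cf => t /=; rewrite !in_itv /=; exact: ab01.
- have dF_ab t : a <= t <= b -> derivable F t 1 by move/ab01/dF => [].
  have /(continuous_within_itvP _ ab).1[_ Fa Fb] : {within `[a, b], continuous F}.
    by apply: derivable_within_continuous => t; rewrite in_itv /=; exact: dF_ab.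
  split => // t; rewrite in_itv /= => /andP[ta tb]; apply: dF_ab.
  by apply/andP; split; exact: ltW.
- move=> t; rewrite in_itv /= => /andP[ta tb].
  have /dF[_ <-] : 0 < t < 1 by apply/andP; split; lra.
  by rewrite derive1E.
Qed.

Lemma integrable_oo01_powR (p : R) : -1 < p ->
  mu.-integrable `]0%R, 1%R[ (fun t => (t `^ p)%:E).
Proof.
move=> p1; have p1_gt0 : 0 < p + 1 by lra.
apply: (@ge0_integrable_le _ _ _ mu _ (fun t => t `^ p) ((p + 1)^-1 *+ 2)).
- exact: measurable_funTS (measurable_powR p).
- by move=> t _; exact: powR_ge0.
apply: (@ge0_integral_oo01_antiderivative_le (fun t => t `^ p) ((p + 1)^-1 \*: (fun t => t `^ (p + 1))) _).
- apply: derivable_within_continuous => t; rewrite in_itv /= => /andP[t0 _].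
  by apply: derivable_powR; rewrite in_itv /= t0.
- by move=> t _; exact: powR_ge0.
- move=> t /andP[t0 _]; apply: is_derive_eq (is_deriveZ _ (is_derive1_powR _ t0)) _.
  by rewrite addrK -[_ *: _]/(_ * _) mulrA mulVf ?mul1r ?gt_eqF.
- move=> t /andP[t0 t1] /=.
  rewrite normrM gtr0_norm ?invr_gt0 // ger0_norm ?powR_ge0 //.
  apply: ler_piMr; first by rewrite invr_ge0 ltW.
  by apply: powR_le1; [rewrite t0 ltW | exact: ltW].
Qed.

Lemma is_derive_onem_powR (p t : R) : t < 1 ->
  is_derive t 1 (fun s => (1 - s) `^ p) (- (p * (1 - t) `^ (p - 1))).
Proof.
move=> t1.
have d_onem : is_derive t 1 (fun s : R => 1 - s) (-1).
  have [d_onem dE] := is_deriveB (is_derive_cst (1 : R) t 1) (is_derive_id t 1).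
  by split; [exact: d_onem | rewrite dE sub0r].
have d_powR : is_derive (1 - t) 1 (fun s : R => s `^ p) (p * (1 - t) `^ (p - 1)).
  by apply: is_derive1_powR; rewrite subr_gt0.
have [d_comp dE] := @is_derive1_comp R (fun s => s `^ p) (fun s => 1 - s) t _ _ d_powR d_onem.
by split; [exact: d_comp | rewrite dE mulrN1].
Qed.

Lemma integrable_oo01_onem_powR (p : R) : -1 < p ->
  mu.-integrable `]0%R, 1%R[ (fun t => ((1 - t) `^ p)%:E).
Proof.
move=> p1; have p1_gt0 : 0 < p + 1 by lra.
apply: (@ge0_integrable_le _ _ _ mu _ (fun t => (1 - t) `^ p) ((p + 1)^-1 *+ 2)).
- apply: measurable_funTS; apply: measurableT_comp (measurable_powR p) _.
  exact: measurable_funB.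
- by move=> t _; exact: powR_ge0.
apply: (@ge0_integral_oo01_antiderivative_le (fun t => (1 - t) `^ p)
  (- (p + 1)^-1 \*: (fun t => (1 - t) `^ (p + 1))) _).
- apply: derivable_within_continuous => t; rewrite in_itv /= => /andP[_ t1].
  by have [] := is_derive_onem_powR p t1.
- by move=> t _; exact: powR_ge0.
- move=> t /andP[_ t1].
  apply: is_derive_eq (is_deriveZ _ (is_derive_onem_powR _ t1)) _.
  by rewrite addrK -[_ *: _]/(_ * _) mulNr mulrN opprK mulrA mulVf ?mul1r ?gt_eqF.
- move=> t /andP[t0 t1] /=.
  rewrite -[_ *: _]/(_ * _) normrM normrN (ger0_norm (powR_ge0 _ _)).
  rewrite gtr0_norm ?invr_gt0 //.
  apply: ler_piMr; first by rewrite invr_ge0 ltW.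
  by apply: powR_le1; [rewrite subr_gt0 t1 gerBl ltW | exact: ltW].
Qed.

End unit_interval.

Section bigamma.
Variable R : realType.
Let mu := @lebesgue_measure R.
Implicit Types a y t : R.

Lemma measurable_oppln_powR (p : R) : measurable_fun setT (fun t : R => (- ln t) `^ p).
Proof.
apply: measurableT_comp (measurable_powR p) _.
by apply: measurableT_comp => //; exact: measurable_ln.
Qed.

Lemma measurable_oppln_onem_powR (p : R) :
  measurable_fun setT (fun t : R => (- ln (1 - t)) `^ p).
Proof.
apply: measurableT_comp (measurable_powR p) _.
apply: measurableT_comp => //; apply: measurableT_comp (@measurable_ln R) _.
exact: measurable_funB.
Qed.

Lemma measurable_bigamma_integrand x y : measurable_fun setT (bigamma_integrand x y).
Proof. exact: measurable_funM (measurable_oppln_powR _) (measurable_oppln_onem_powR _). Qed.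

Lemma measurable_cmp_integrand a y : measurable_fun setT (cmp_integrand a y).
Proof. exact: measurable_funM (measurable_powR _) (measurable_oppln_onem_powR _). Qed.

Lemma bigamma_integrand_ge0 x y t : 0 <= bigamma_integrand x y t.
Proof. by rewrite mulr_ge0 ?powR_ge0. Qed.

Lemma cmp_integrand_ge0 a y t : 0 <= cmp_integrand a y t.
Proof. by rewrite mulr_ge0 ?powR_ge0. Qed.

Lemma cmp_const_ge0 a x : 0 <= cmp_const a x.
Proof. by rewrite mulr_ge0 ?powR_ge0. Qed.

Lemma cmp_integrand_le_bigamma_integrand a x y t :
  0 < a < 1 -> 0 < x <= 1 -> 0 < t < 1 ->
  cmp_const a x * cmp_integrand a y t <= bigamma_integrand x y t.
Proof.
move=> a01 x01 t01; rewrite /cmp_integrand /bigamma_integrand mulrA.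
by rewrite ler_wpM2r ?powR_ge0 // cmp_const_powR_le_oppln.
Qed.

Lemma bigamma_integrand_le_cmp_integrand a x y t :
  1 < a -> 1 <= x -> 0 < t < 1 ->
  bigamma_integrand x y t <= cmp_const a x * cmp_integrand a y t.
Proof.
move=> a1 x1 t01; rewrite /cmp_integrand /bigamma_integrand mulrA.
by rewrite ler_wpM2r ?powR_ge0 // oppln_le_cmp_const_powR.
Qed.

Lemma cmp_integrand_le_powR a y t : y <= 1 -> 0 < t < 1 ->
  cmp_integrand a y t <= t `^ ((1 - a) / a + (y - 1)).
Proof.
move=> y1 t01; have /andP[t0 _] := t01.
rewrite /cmp_integrand [leRHS]powRD; last by apply/implyP => _; rewrite gt_eqF.
apply: ler_wpM2l; first exact: powR_ge0.
by apply: le0_ger_powR; rewrite ?subr_le0 // le_oppln_onem.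
Qed.

Lemma cmp_integrand_le_sum_powR a y t : 1 < a -> 1 <= y -> 0 < t < 1 ->
  cmp_integrand a y t <=
    2 * cmp_const 2 y * (t `^ ((1 - a) / a) + (1 - t) `^ (- 2^-1)).
Proof.
move=> a1 y1 t01; have /andP[t0 t1] := t01; have a0 : 0 < a by lra.
have c10 : -1 <= (1 - a) / a <= 0.
  rewrite mulrBl mul1r mulfV ?gt_eqF //; have : 0 < a^-1 < 1 by rewrite invr_gt0 a0 invf_lt1.
  by move=> /andP[? ?]; apply/andP; split; lra.
have log_le : (- ln (1 - t)) `^ (y - 1) <= cmp_const 2 y * (1 - t) `^ (- 2^-1).
  have -> : - 2^-1 = (1 - 2) / 2 :> R by field.
  by apply: oppln_le_cmp_const_powR; rewrite ?ltr1n //; apply/andP; split; lra.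
rewrite /cmp_integrand; apply: le_trans (ler_wpM2l (powR_ge0 _ _) log_le) _.
rewrite [leLHS]mulrCA -[leRHS]mulrA [leRHS]mulrCA ler_wpM2l ?cmp_const_ge0 // mul_powR_onem_le //.
by apply/andP; split; lra.
Qed.

Lemma integrable_cmp_integrand a y : 1 < a -> (a - 1) / a < y ->
  mu.-integrable `]0%R, 1%R[ (fun t => (cmp_integrand a y t)%:E).
Proof.
move=> a1 ya; have a0 : 0 < a by lra.
have mD : measurable (`]0%R, 1%R[ : set (measurableTypeR R)) by exact: measurable_itv.
have mf : measurable_fun (`]0%R, 1%R[ : set (measurableTypeR R)) (cmp_integrand a y) :=
  measurable_funTS (measurable_cmp_integrand a y).
have c_gtN1 : -1 < (1 - a) / a.
  rewrite mulrBl mul1r mulfV ?gt_eqF //; have : 0 < a^-1 by rewrite invr_gt0.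
  lra.
have [y1|y1] := leP y 1.
  have p_gtN1 : -1 < (1 - a) / a + (y - 1).
    have : (a - 1) / a = - ((1 - a) / a) by rewrite -mulNr opprB.
    lra.
  apply: (ge0_le_integrable mD mf _ (integrable_oo01_powR p_gtN1)).
  by move=> t /= /[!in_itv] /= t01; rewrite cmp_integrand_ge0 cmp_integrand_le_powR.
have q_gtN1 : -1 < - 2^-1 :> R by lra.
apply: (ge0_le_integrable mD mf _ (integrableZl mD (2 * cmp_const 2 y) (integrableD mD
    (integrable_oo01_powR c_gtN1) (integrable_oo01_onem_powR q_gtN1)))).
by move=> t /= /[!in_itv] /= t01; rewrite cmp_integrand_ge0 cmp_integrand_le_sum_powR // ltW.
Qed.

End bigamma.

Theorem mainTheorem4 (R : realType) (a x y : R) :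
  0 < a -> a != 1 -> 0 < x -> 0 < y ->
  (x <= 1 -> a < 1 ->
     (Bigamma x y >=
      (cmp_const a x)%:E *
        \int[@lebesgue_measure R]_(t in `]0%R, 1%R[) (cmp_integrand a y t)%:E)%E) /\
  (1 <= x -> 1 < a -> (a - 1) / a < y ->
     (@lebesgue_measure R).-integrable `]0%R, 1%R[ (fun t => (cmp_integrand a y t)%:E) /\
     (Bigamma x y <=
      (cmp_const a x)%:E *
        \int[@lebesgue_measure R]_(t in `]0%R, 1%R[) (cmp_integrand a y t)%:E)%E).
Proof.
move=> a0 _ x0 _.
have mD : measurable (`]0%R, 1%R[ : set (measurableTypeR R)) by exact: measurable_itv.
have mb : measurable_fun (`]0%R, 1%R[ : set (measurableTypeR R)) (bigamma_integrand x y) :=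
  measurable_funTS (measurable_bigamma_integrand x y).
have mc : measurable_fun (`]0%R, 1%R[ : set (measurableTypeR R)) (cmp_integrand a y) :=
  measurable_funTS (measurable_cmp_integrand a y).
split => [x1 a1 | x1 a1 ya].
  apply: ge0_ge_integral_scale mD mb mc _ (cmp_const_ge0 a x) _ => [t _|t /= /[!in_itv] /= t01].
    exact: cmp_integrand_ge0.
  by apply: cmp_integrand_le_bigamma_integrand; rewrite ?a0 ?x0.
split; first exact: integrable_cmp_integrand.
apply: ge0_le_integral_scale mD mb mc _ _ (cmp_const_ge0 a x) _ => [t _|t _|t /= /[!in_itv] /= t01].
- exact: bigamma_integrand_ge0.
- exact: cmp_integrand_ge0.
- exact: bigamma_integrand_le_cmp_integrand.
Qed.
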